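(* For every $n\ge1$ and $b\in\mathbb{Z}$ there exists a checking algorithm for the function $f_b(x)=bx$ over the domain $D_n$ that makes a constant number of queries to the program $P_b$ and uses $O(n)$ additional computation time.
   Context: $D_n=\{0,1,\dots,2^n-1\}$. A program $P_b$ is modeled as an arbitrary function $P_b:\{0,1,\dots,2^n\}\to\mathbb{Z}$ that may be queried at any point. A checking algorithm for $f$ is a randomized algorithm $C$ that receives an input $x$ and query access to a program $P$ and outputs PASS or FAIL such that: if $P=f$ on all inputs, $C$ outputs PASS with probability at least $2/3$; if $P(x)\ne f(x)$ at the given $x$, $C$ outputs FAIL with probability at least $2/3$ (probabilities over the coin tosses of $C$ only). Additional computation time means running time excluding time spent by $P$ answering queries; additions, comparisons and shifts by $n$ positions count as linear-time operations. *)

From HB Require Import structures.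
From mathcomp Require Import all_boot all_order all_algebra.
Set Implicit Arguments. Unset Strict Implicit. Unset Printing Implicit Defensive.
Import Order.TTheory GRing.Theory Num.Theory.
Local Open Scope ring_scope.

(* Checker programs: loop-free register programs over integer registers
   (indexed by nat).  Register 0 initially holds the input x, all other
   registers hold 0.  Instructions:
     CConst d c k   : r_d := c
     CAdd d a b k   : r_d := r_a + r_b
     CSub d a b k   : r_d := r_a - r_b
     CShl d a k     : r_d := r_a * 2^n        (shift left by n positions)
     CShr d a k     : r_d := floor (r_a / 2^n) (shift right by n positions)
     CIfLe a b k1 k2: if r_a <= r_b then k1 else k2   (comparison)
     CRand d k      : r_d := uniformly random element of D_n = {0..2^n-1}
     CQuery d a k   : r_d := P (r_a)           (query to the program)
     CHalt pass     : output PASS (true) or FAIL (false). *)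
Inductive prog : Type :=
| CHalt of bool
| CConst of nat & int & prog
| CAdd of nat & nat & nat & prog
| CSub of nat & nat & nat & prog
| CShl of nat & nat & prog
| CShr of nat & nat & prog
| CIfLe of nat & nat & prog & prog
| CRand of nat & prog
| CQuery of nat & nat & prog.

Definition upd (r : nat -> int) (d : nat) (v : int) : nat -> int :=
  fun i => if i == d then v else r i.

Definition init_regs (x : int) : nat -> int := fun i => if i == 0%N then x else 0.

Fixpoint pass_prob (n : nat) (P : int -> int) (p : prog) (r : nat -> int) : rat :=
  match p with
  | CHalt b => if b then 1 else 0
  | CConst d c k => pass_prob n P k (upd r d c)
  | CAdd d a b k => pass_prob n P k (upd r d (r a + r b))
  | CSub d a b k => pass_prob n P k (upd r d (r a - r b))
  | CShl d a k => pass_prob n P k (upd r d (r a * (2 ^ n)%:Z))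
  | CShr d a k => pass_prob n P k (upd r d (r a %/ (2 ^ n)%:Z)%Z)
  | CIfLe a b k1 k2 => if r a <= r b then pass_prob n P k1 r else pass_prob n P k2 r
  | CRand d k =>
      (\sum_(v < 2 ^ n) pass_prob n P k (upd r d (nat_of_ord v)%:Z)) / (2 ^ n)%:R
  | CQuery d a k => pass_prob n P k (upd r d (P (r a)))
  end.

(* worst-case additional computation time: every non-query operation
   (addition, subtraction, comparison, shift by n positions, loading a
   constant, drawing a random element of D_n) is a linear-time operation
   and costs n; queries cost nothing (time spent by P is excluded). *)
Fixpoint comp_time (n : nat) (p : prog) : nat :=
  match p with
  | CHalt _ => 0
  | CConst _ _ k | CAdd _ _ _ k | CSub _ _ _ k | CShl _ _ k | CShr _ _ k
  | CRand _ k => n + comp_time n k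
  | CIfLe _ _ k1 k2 => n + maxn (comp_time n k1) (comp_time n k2)
  | CQuery _ _ k => comp_time n k
  end.

Fixpoint num_queries (p : prog) : nat :=
  match p with
  | CHalt _ => 0
  | CConst _ _ k | CAdd _ _ _ k | CSub _ _ _ k | CShl _ _ k | CShr _ _ k
  | CRand _ k => num_queries k
  | CIfLe _ _ k1 k2 => maxn (num_queries k1) (num_queries k2)
  | CQuery _ _ k => (num_queries k).+1
  end.

(* C is a checking algorithm for f over D_n (programs have domain {0..2^n}) *)
Definition is_checker (n : nat) (f : int -> int) (C : prog) : Prop :=
  forall x : int, 0 <= x < (2 ^ n)%:Z ->
    (forall P : int -> int,
        (forall y : int, 0 <= y <= (2 ^ n)%:Z -> P y = f y) ->
        2%:R / 3%:R <= pass_prob n P C (init_regs x)) /\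
    (forall P : int -> int, P x <> f x ->
        2%:R / 3%:R <= 1 - pass_prob n P C (init_regs x)).

From HB Require Import structures.
From mathcomp Require Import all_boot all_order all_algebra.
From mathcomp Require Import zify lra.
Set Implicit Arguments. Unset Strict Implicit. Unset Printing Implicit Defensive.
Import Order.TTheory GRing.Theory Num.Theory.
Local Open Scope ring_scope.

(* The checker runs a BLR-style linearity test on the error e(v) = P(v) - b v,
   viewed as an int-valued function on Z/2^n: with the carry correction,
   f_b is additive on Z/2^n, so the test "P(v) + P(w) = P(v + w mod 2^n) + b 2^n
   [carry]" passes exactly when e(v) + e(w) = e(v + w).  Seven rounds on random
   pairs are followed by one round on (x, w) with w random.
   If more than a sixth of all pairs fail, the seven rounds pass with probability
   at most (5/6)^7 < 1/3.  Otherwise the majority vote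
   g(z) = maj_r (e(z + r) - e(r)) is an additive map from the finite group Z/2^n
   to Z, hence zero, and the pairs (x, w) with e(x) + e(w) = e(x + w) all
   disagree with this vote at z = x whenever e(x) <> 0, so the last round
   passes with probability less than 1/3. *)

Lemma exists_le_mean (T : finType) (x0 : T) (F : T -> nat) :
  exists r, (#|T| * F r <= \sum_(s : T) F s)%N.
Proof.
have [r _ r_min] := @arg_minnP T x0 xpredT F erefl.
by exists r; rewrite -sum_nat_const; apply: leq_sum => s _; apply: r_min.
Qed.

Lemma additive_to_int_eq0 (G : finZmodType) (g : G -> int) :
  (forall z w, g z + g w = g (z + w)) -> forall z, g z = 0.
Proof.
move=> g_add z; apply/eqP.
have : \sum_(r : G) g r = g z *+ #|G| + \sum_(r : G) g r.
  rewrite {1}(reindex_inj (addrI z)) /=.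
  under eq_bigr do rewrite -g_add.
  by rewrite big_split sumr_const.
rewrite -[X in X = _]add0r => /addIr/esym/eqP; rewrite mulrn_eq0 => /orP[|//].
by move/eqP/card0_eq/(_ 0).
Qed.

Section AdditivityTest.
Variables (G : finZmodType) (e : G -> int).

Definition additive_partners (v : G) : nat := \sum_(w : G) ((e v + e w == e (v + w))%R : nat).
Definition additive_pairs : nat := \sum_(v : G) additive_partners v.
Definition nonadditive_pairs : nat :=
  \sum_(v : G) \sum_(w : G) ((e v + e w != e (v + w))%R : nat).

Lemma additive_pairsD : (additive_pairs + nonadditive_pairs = #|G| * #|G|)%N.
Proof.
rewrite -big_split -sum_nat_const; apply: eq_bigr => v _.
rewrite -big_split -sum1_card /=; apply: eq_bigr => w _.
by case: eqP.
Qed.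

Definition diff_at (z r : G) : int := e (z + r) - e r.
Definition misses (z : G) (v : int) : nat := \sum_(r : G) (v != diff_at z r : nat).

Lemma diff_at_agree z r s :
  e (z + r) + e s = e (z + r + s) -> e (z + s) + e r = e (z + s + r) ->
  diff_at z r = diff_at z s.
Proof.
rewrite /diff_at [z + s + r]addrAC => h1 h2.
by rewrite -(addrK (e s) (e (z + r))) h1 -h2; lia.
Qed.

Lemma diff_disagreements z :
  (\sum_(r : G) \sum_(s : G) (diff_at z r != diff_at z s : nat) <= 2 * nonadditive_pairs)%N.
Proof.
pose nonadd v w := ((e v + e w != e (v + w))%R : nat).
have le_nonadd r s :
    ((diff_at z r != diff_at z s) <= nonadd (z + r)%R s + nonadd (z + s)%R r)%N.
  have [//|ne_rs] := eqVneq (diff_at z r) (diff_at z s).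
  rewrite /nonadd; case: eqP => [h1|//]; case: eqP => [h2|//].
  by rewrite (diff_at_agree h1 h2) eqxx in ne_rs.
apply: (@leq_trans (\sum_(r : G) \sum_(s : G) (nonadd (z + r)%R s + nonadd (z + s)%R r))%N).
  by apply: leq_sum => r _; apply: leq_sum => s _; apply: le_nonadd.
have translate : (\sum_(r : G) \sum_(s : G) nonadd (z + r)%R s = nonadditive_pairs)%N.
  by rewrite [RHS](reindex_inj (addrI z)).
rewrite (eq_bigr _ (fun r _ => big_split _ _ _ _ _)) big_split /=.
by rewrite [X in (_ + X)%N]exchange_big /= translate addnn mul2n.
Qed.

Lemma exists_majority z : exists v, (#|G| * misses z v <= 2 * nonadditive_pairs)%N.
Proof.
have [r0 le_r0] :=
  @exists_le_mean G 0 (fun r => \sum_(s : G) (diff_at z r != diff_at z s : nat))%N.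
by exists (diff_at z r0); apply: leq_trans le_r0 (diff_disagreements z).
Qed.

Hypothesis few_nonadditive : (6 * nonadditive_pairs < #|G| * #|G|)%N.

Definition corrected (z : G) : int := xchoose (exists_majority z).

Lemma corrected_misses z : (3 * misses z (corrected z) < #|G|)%N.
Proof.
have G_gt0 : (0 < #|G|)%N by apply/card_gt0P; exists 0.
rewrite -(ltn_pmul2l G_gt0); apply: leq_ltn_trans few_nonadditive.
by have := xchooseP (exists_majority z); rewrite -/(corrected z); lia.
Qed.

Lemma corrected_additive z w : corrected z + corrected w = corrected (z + w).
Proof.
pose miss r := ((corrected z != diff_at z (w + r)%R) + (corrected w != diff_at w r)
                + (corrected (z + w)%R != diff_at (z + w)%R r))%N.
have [r le_r] := @exists_le_mean G 0 miss.
have sum_miss : (\sum_(r : G) miss r = misses z (corrected z) + misses w (corrected w)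
                                  + misses (z + w)%R (corrected (z + w)%R))%N.
  by rewrite !big_split /= [misses z _](reindex_inj (addrI w)).
have {le_r} : (#|G| * miss r < #|G| * 1)%N.
  apply: leq_ltn_trans le_r _; rewrite sum_miss muln1.
  have := corrected_misses z; have := corrected_misses w.
  have := corrected_misses (z + w); lia.
rewrite ltn_pmul2l; last by apply/card_gt0P; exists 0.
rewrite /miss /diff_at; case: eqP => // ->; case: eqP => // ->; case: eqP => // ->.
by rewrite addrA subrK addrA.
Qed.

Lemma additive_partners_small x : e x != 0 -> (3 * additive_partners x < #|G|)%N.
Proof.
move=> ex_neq0; apply: leq_ltn_trans (corrected_misses x).
rewrite leq_mul2l (additive_to_int_eq0 corrected_additive) /=.
apply: leq_sum => t _; case: eqP => // ex_add.
by rewrite /diff_at -ex_add addrK eq_sym ex_neq0.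
Qed.

End AdditivityTest.

Lemma ler_nat_div (p q u v : nat) : (0 < q)%N -> (0 < v)%N -> (p * v <= u * q)%N ->
  p%:R / q%:R <= u%:R / v%:R :> rat.
Proof.
move=> q_gt0 v_gt0.
by rewrite ler_pdivrMr ?ltr0n // mulrAC ler_pdivlMr ?ltr0n // -!natrM ler_nat.
Qed.

Lemma pow7_mul_le_third (a s : rat) :
  0 <= a <= 1 -> 0 <= s <= 1 -> a <= 5%:R / 6%:R \/ s <= 1 / 3%:R -> a ^+ 7 * s <= 1 / 3%:R.
Proof.
move=> /andP[a0 a1] /andP[s0 s1] [a_le|s_le].
  have a7 : a ^+ 7 <= (5%:R / 6%:R) ^+ 7 by apply: lerXn2r; rewrite // nnegrE divr_ge0.
  rewrite -[leRHS]mulr1; apply: ler_pM => //; first exact: exprn_ge0.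
  by apply: le_trans a7 _; rewrite !exprS expr0; lra.
rewrite -[leRHS]mul1r; apply: ler_pM => //; first exact: exprn_ge0.
exact: exprn_ile1.
Qed.

Lemma modn_add_carry (d v w : nat) : (v < d)%N -> (w < d)%N ->
  ((v + w) %% d + (if (v + w < d)%N then 0 else d) = v + w)%N.
Proof.
move=> v_lt w_lt; case: ltnP => [sum_lt|sum_ge]; first by rewrite modn_small ?addn0.
by rewrite -{1}(subnK sum_ge) modnDr modn_small ?subnK //; lia.
Qed.

Lemma operand_neq_scratch (i d : nat) : (i < 3)%N -> (2 < d)%N -> (i == d) = false.
Proof. by move=> ? ?; apply/eqP; lia. Qed.

Section Checker.
Variables (n : nat) (b : int).
Local Notation N := (2 ^ n)%N.

Definition pass_on (P : int -> int) (x : int) (k : prog) (V : rat) : Prop :=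
  forall r, r 0%N = x -> pass_prob n P k r = V.

(* Operands of the tests live in registers 0-2 (the input is register 0);
   registers 3-9 are scratch. *)
Definition assert_eq (i j : nat) (k : prog) : prog :=
  CIfLe i j (CIfLe j i k (CHalt false)) (CHalt false).

Definition query_test (i j : nat) (w : int) (k : prog) : prog :=
  CQuery 5 i (CQuery 6 j (CQuery 7 3
    (CConst 9 w (CAdd 7 7 9 (CAdd 8 5 6 (assert_eq 8 7 k)))))).

Definition sum_test (P : int -> int) (vi vj : nat) : bool :=
  P vi%:Z + P vj%:Z ==
  P ((vi + vj) %% N)%N%:Z + b * (if (vi + vj < N)%N then 0 else N)%N%:Z.

Definition sum_test_prog (i j : nat) (k : prog) : prog :=
  CAdd 3 i j (CConst 4 (N%:Z - 1) (CIfLe 3 4 (query_test i j 0 k)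
    (CConst 4 N%:Z (CSub 3 3 4 (query_test i j (b * N%:Z) k))))).

Lemma pass_prob_sum_test P i j k x V r (vi vj : nat) :
  (i < 3)%N -> (j < 3)%N -> (vi < N)%N -> (vj < N)%N -> r i = vi%:Z -> r j = vj%:Z ->
  pass_on P x k V -> r 0%N = x ->
  pass_prob n P (sum_test_prog i j k) r = (sum_test P vi vj)%:R * V.
Proof.
move=> i_lt j_lt vi_lt vj_lt ri rj k_V r0.
rewrite /= /upd /= !(operand_neq_scratch i_lt) // !(operand_neq_scratch j_lt) // ri rj !k_V //.
have if_le_le (u w : int) : (if u <= w then if w <= u then V else 0 else 0) = (u == w)%:R * V.
  by case: ltgtP; rewrite ?mul0r ?mul1r.
have carry := modn_add_carry vi_lt vj_lt.
rewrite !if_le_le /sum_test; case: ltnP carry => [sum_lt|sum_ge] /= carry.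
  rewrite ifT; last by lia.
  have -> : vi%:Z + vj%:Z = ((vi + vj) %% N)%N%:Z by lia.
  by rewrite mulr0.
rewrite ifF; last by apply/negbTE; rewrite -ltNge; lia.
by have -> : vi%:Z + vj%:Z - N%:Z = ((vi + vj) %% N)%N%:Z by lia.
Qed.

Lemma sum_test_exact P (vi vj : nat) : (vi < N)%N -> (vj < N)%N ->
  (forall y : int, 0 <= y <= N%:Z -> P y = b * y) -> sum_test P vi vj.
Proof.
move=> vi_lt vj_lt P_eq; have mod_lt : ((vi + vj) %% N < N)%N by rewrite ltn_mod expn_gt0.
by rewrite /sum_test !P_eq -?mulrDr -?PoszD ?modn_add_carry //; apply/andP; split; lia.
Qed.

(* Unfolds a single instruction; [simpl] would unfold the whole continuation. *)
Lemma pass_prob_rand P d k r : pass_prob n P (CRand d k) r =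
  (\sum_(v < N) pass_prob n P k (upd r d v%:Z)) / N%:R.
Proof. by []. Qed.

Definition lin_round (k : prog) : prog := CRand 1 (CRand 2 (sum_test_prog 1 2 k)).
Definition selfcorr_round (k : prog) : prog := CRand 2 (sum_test_prog 0 2 k).
Definition checker : prog := iter 7 lin_round (selfcorr_round (CHalt true)).

Definition sum_test_rate (P : int -> int) (x : nat) : rat :=
  (\sum_(w < N) (sum_test P x w)%:R) / N%:R.
Definition mean_sum_test_rate (P : int -> int) : rat :=
  (\sum_(v < N) sum_test_rate P v) / N%:R.

Lemma pass_on_selfcorr_round P (x : nat) k V : (x < N)%N -> pass_on P x%:Z k V ->
  pass_on P x%:Z (selfcorr_round k) (sum_test_rate P x * V).
Proof.
move=> x_lt k_V r r0; rewrite pass_prob_rand /sum_test_rate mulrAC [in RHS]mulr_suml.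
congr (_ / _).
by apply: eq_bigr => w _; rewrite (pass_prob_sum_test (vi := x) (vj := w) _ _ _ _ _ _ k_V).
Qed.

Lemma pass_on_lin_round P x k V : pass_on P x k V ->
  pass_on P x (lin_round k) (mean_sum_test_rate P * V).
Proof.
move=> k_V r r0; rewrite pass_prob_rand /mean_sum_test_rate mulrAC [in RHS]mulr_suml.
congr (_ / _); apply: eq_bigr => v _.
rewrite pass_prob_rand /sum_test_rate mulrAC [in RHS]mulr_suml; congr (_ / _).
by apply: eq_bigr => w _; rewrite (pass_prob_sum_test (vi := v) (vj := w) _ _ _ _ _ _ k_V).
Qed.

Lemma pass_on_checker P (x : nat) : (x < N)%N ->
  pass_on P x%:Z checker (mean_sum_test_rate P ^+ 7 * sum_test_rate P x).
Proof.
move=> x_lt; rewrite /checker; elim: 7%N => [|j IH].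
  by rewrite expr0 mul1r -[sum_test_rate P x]mulr1; apply: pass_on_selfcorr_round.
by rewrite iterS exprS -mulrA; apply: pass_on_lin_round.
Qed.

Lemma comp_time_checker : comp_time n checker = (95 * n)%N.
Proof.
suff ct_iter j : comp_time n (iter j lin_round (selfcorr_round (CHalt true)))
                 = (12 * j * n + 11 * n)%N.
  by rewrite ct_iter; lia.
by elim: j => [|j IH] /=; rewrite ?IH !maxn0; lia.
Qed.

Lemma num_queries_checker : num_queries checker = 24%N.
Proof.
suff nq_iter j : num_queries (iter j lin_round (selfcorr_round (CHalt true))) = (3 * j + 3)%N.
  by rewrite nq_iter.
by elim: j => [|j IH] /=; rewrite ?IH !maxn0; lia.
Qed.

Lemma checker_complete P (x : nat) : (x < N)%N ->
  (forall y : int, 0 <= y <= N%:Z -> P y = b * y) ->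
  pass_prob n P checker (init_regs x%:Z) = 1.
Proof.
move=> x_lt P_eq; rewrite (pass_on_checker P x_lt) //.
have N_neq0 : N%:R != 0 :> rat by rewrite pnatr_eq0 -lt0n expn_gt0.
have rate1 v : (v < N)%N -> sum_test_rate P v = 1.
  move=> v_lt; rewrite /sum_test_rate (eq_bigr (fun _ => 1)) => [|w _].
    by rewrite sumr_const card_ord divff.
  by rewrite sum_test_exact.
rewrite rate1 // /mean_sum_test_rate (eq_bigr (fun _ => 1)) => [|v _]; last exact: rate1.
by rewrite sumr_const card_ord divff ?expr1n ?mulr1.
Qed.

Section Soundness.
Variables (m : nat) (P : int -> int).
Hypothesis N_eq : N = m.+1.

Definition err (v : 'I_m.+1) : int := P v - b * v.

Lemma sum_test_err (v w : 'I_m.+1) : sum_test P v w = (err v + err w == err (v + w)).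
Proof.
have carry : b * v + b * w =
    b * ((v + w) %% m.+1)%N + b * (if (v + w < m.+1)%N then 0 else m.+1)%N.
  by rewrite -!mulrDr -!PoszD modn_add_carry.
by rewrite /sum_test /err /= N_eq; apply/eqP/eqP; lia.
Qed.

Lemma sum_test_rate_err (x : 'I_m.+1) :
  sum_test_rate P x = (additive_partners err x)%:R / m.+1%:R.
Proof.
rewrite /sum_test_rate /additive_partners N_eq natr_sum; congr (_ / _).
by apply: eq_bigr => w _; rewrite sum_test_err.
Qed.

Lemma mean_sum_test_rate_err :
  mean_sum_test_rate P = (additive_pairs err)%:R / (m.+1 * m.+1)%:R.
Proof.
rewrite /mean_sum_test_rate /additive_pairs N_eq natr_sum natrM invfM mulrA; congr (_ / _).
by rewrite mulr_suml; apply: eq_bigr => v _; rewrite sum_test_rate_err.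
Qed.

Lemma rate_product_le_third (x : 'I_m.+1) : err x != 0 ->
  mean_sum_test_rate P ^+ 7 * sum_test_rate P x <= 1 / 3%:R.
Proof.
move=> err_x; rewrite mean_sum_test_rate_err sum_test_rate_err.
have pairsD := additive_pairsD err; rewrite card_ord in pairsD.
have NN_gt0 : (0 : rat) < (m.+1 * m.+1)%:R by rewrite ltr0n.
have N_gt0 : (0 : rat) < m.+1%:R by rewrite ltr0n.
apply: pow7_mul_le_third.
- by rewrite divr_ge0 //= ler_pdivrMr // mul1r ler_nat -pairsD leq_addr.
- rewrite divr_ge0 //= ler_pdivrMr // mul1r ler_nat -[leqRHS]card_ord -sum1_card.
  by apply: leq_sum => w _; case: (_ == _).
case: (ltnP (6 * nonadditive_pairs err) (#|'I_m.+1| * #|'I_m.+1|)) => [few|many].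
  right; apply: (@ler_nat_div _ _ 1) => //.
  by have := additive_partners_small few err_x; rewrite card_ord; lia.
left; apply: ler_nat_div => //; rewrite -pairsD.
by move: many; rewrite card_ord -pairsD; lia.
Qed.

End Soundness.

Lemma checker_sound P (x : nat) : (x < N)%N -> P x%:Z != b * x%:Z ->
  pass_prob n P checker (init_regs x%:Z) <= 1 / 3%:R.
Proof.
move=> x_lt Px_neq; rewrite (pass_on_checker P x_lt) //.
have N_eq : N = N.-1.+1 by rewrite prednK // expn_gt0.
have x_lt' : (x < N.-1.+1)%N by rewrite -N_eq.
by apply: (rate_product_le_third N_eq (x := Ordinal x_lt')); rewrite /err subr_eq0.
Qed.

End Checker.

Theorem theorem2 :
  exists (Q K : nat), forall n : nat, (1 <= n)%N -> forall b : int,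
    exists C : prog,
      is_checker n (fun x => b * x) C /\
      (num_queries C <= Q)%N /\ (comp_time n C <= K * n)%N.
Proof.
exists 24%N, 95%N => n _ b; exists (checker n b).
split; last by rewrite num_queries_checker comp_time_checker.
case=> [x|//] /andP[_]; rewrite ltz_nat => x_lt; split=> P P_eq.
  by rewrite checker_complete //; lra.
by have := checker_sound x_lt (introN eqP P_eq); lra.
Qed.
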